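(* Let $A$ be a Banach algebra. (a) If $A$ has no unit and has a two-sided approximate identity (not necessarily bounded), then there is a net $(y_\mu)_{\mu\in\Lambda_0}$ in $A$ such that $y_\mu x\to0$ and $xy_\mu\to 0$ for every $x\in A$, and $y_\mu\not\to 0$. (b) If $A$ has no left unit and has a left approximate identity, then there is a net $(y_\mu)$ in $A$ with $y_\mu x\to 0$ for every $x\in A$ and $y_\mu\not\to0$. (c) If $A$ has no right unit and has a right approximate identity, then there is a net $(y_\mu)$ in $A$ with $xy_\mu\to 0$ for every $x\in A$ and $y_\mu\not\to0$. *)

From Stdlib Require Import Reals.
Open Scope R_scope.

Record BanachAlgebra := mkBA {
  ba_car :> Type;
  ba_zero : ba_car;
  ba_add : ba_car -> ba_car -> ba_car;
  ba_opp : ba_car -> ba_car;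
  ba_scal : R -> ba_car -> ba_car;
  ba_mul : ba_car -> ba_car -> ba_car;
  ba_norm : ba_car -> R;
  ba_addA : forall x y z, ba_add x (ba_add y z) = ba_add (ba_add x y) z;
  ba_addC : forall x y, ba_add x y = ba_add y x;
  ba_add0 : forall x, ba_add ba_zero x = x;
  ba_addN : forall x, ba_add x (ba_opp x) = ba_zero;
  ba_scalA : forall a b x, ba_scal a (ba_scal b x) = ba_scal (a * b) x;
  ba_scal1 : forall x, ba_scal 1 x = x;
  ba_scalDr : forall a x y, ba_scal a (ba_add x y) = ba_add (ba_scal a x) (ba_scal a y);
  ba_scalDl : forall a b x, ba_scal (a + b) x = ba_add (ba_scal a x) (ba_scal b x);
  ba_mulA : forall x y z, ba_mul x (ba_mul y z) = ba_mul (ba_mul x y) z;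
  ba_mulDl : forall x y z, ba_mul (ba_add x y) z = ba_add (ba_mul x z) (ba_mul y z);
  ba_mulDr : forall x y z, ba_mul x (ba_add y z) = ba_add (ba_mul x y) (ba_mul x z);
  ba_scal_mull : forall a x y, ba_mul (ba_scal a x) y = ba_scal a (ba_mul x y);
  ba_scal_mulr : forall a x y, ba_mul x (ba_scal a y) = ba_scal a (ba_mul x y);
  ba_norm_eq0 : forall x, ba_norm x = 0 -> x = ba_zero;
  ba_normD : forall x y, ba_norm (ba_add x y) <= ba_norm x + ba_norm y;
  ba_normZ : forall a x, ba_norm (ba_scal a x) = Rabs a * ba_norm x;
  ba_normM : forall x y, ba_norm (ba_mul x y) <= ba_norm x * ba_norm y;
  ba_complete : forall u : nat -> ba_car,
    (forall eps, 0 < eps -> exists N, forall m n, (N <= m)%nat -> (N <= n)%nat ->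
        ba_norm (ba_add (u m) (ba_opp (u n))) < eps) ->
    exists l, forall eps, 0 < eps -> exists N, forall n, (N <= n)%nat ->
        ba_norm (ba_add (u n) (ba_opp l)) < eps
}.

Arguments ba_zero {b0} : rename.
Arguments ba_add {b0} : rename.
Arguments ba_opp {b0} : rename.
Arguments ba_mul {b0} : rename.
Arguments ba_norm {b0} : rename.

Record DirectedSet := mkDirected {
  ds_car :> Type;
  ds_le : ds_car -> ds_car -> Prop;
  ds_inhabited : inhabited ds_car;
  ds_refl : forall i, ds_le i i;
  ds_trans : forall i j k, ds_le i j -> ds_le j k -> ds_le i k;
  ds_directed : forall i j, exists k, ds_le i k /\ ds_le j k
}.

Definition net_converges (A : BanachAlgebra) (D : DirectedSet) (y : D -> A) (l : A) : Prop :=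
  forall eps, 0 < eps -> exists i0 : D, forall i : D, ds_le D i0 i ->
    ba_norm (ba_add (y i) (ba_opp l)) < eps.

Definition is_unit (A : BanachAlgebra) (e : A) : Prop :=
  forall x : A, ba_mul e x = x /\ ba_mul x e = x.
Definition is_left_unit (A : BanachAlgebra) (e : A) : Prop :=
  forall x : A, ba_mul e x = x.
Definition is_right_unit (A : BanachAlgebra) (e : A) : Prop :=
  forall x : A, ba_mul x e = x.

Definition is_left_approx_identity (A : BanachAlgebra) (D : DirectedSet) (e : D -> A) : Prop :=
  forall x : A, net_converges A D (fun i => ba_mul (e i) x) x.
Definition is_right_approx_identity (A : BanachAlgebra) (D : DirectedSet) (e : D -> A) : Prop :=
  forall x : A, net_converges A D (fun i => ba_mul x (e i)) x.
Definition is_approx_identity (A : BanachAlgebra) (D : DirectedSet) (e : D -> A) : Prop :=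
  is_left_approx_identity A D e /\ is_right_approx_identity A D e.

(* Let (e_i) be an approximate identity and put y_(i,j) := e_i - e_j on the
   product directed set.  Since e_i x -> x, the products y_(i,j) x = e_i x - e_j x
   tend to 0.  If y itself tended to 0, the net (e_i) would be Cauchy, hence
   convergent by completeness, and its limit l would satisfy l x = x for all x
   (uniqueness of limits), i.e. be a unit.  The one-sided cases are identical. *)

From Stdlib Require Import Reals Lra Lia IndefiniteDescription.
Open Scope R_scope.

Local Notation ba_dist x y := (ba_norm (ba_add x (ba_opp y))).

Section VectorAlgebra.

Variable A : BanachAlgebra.
Implicit Types x y z : A.

Lemma ba_addr0 x : ba_add x ba_zero = x.
Proof. rewrite ba_addC; apply ba_add0. Qed.

Lemma ba_addNl x : ba_add (ba_opp x) x = ba_zero.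
Proof. rewrite ba_addC; apply ba_addN. Qed.

Lemma ba_addIr x y z : ba_add x y = ba_add x z -> y = z.
Proof.
  intro H.
  rewrite <- (ba_add0 A y), <- (ba_addNl x), <- ba_addA, H, ba_addA, ba_addNl, ba_add0.
  reflexivity.
Qed.

Lemma ba_scal0 x : ba_scal A 0 x = ba_zero.
Proof.
  apply (ba_addIr (ba_scal A 0 x)).
  rewrite ba_addr0, <- ba_scalDl, Rplus_0_r; reflexivity.
Qed.

Lemma ba_scalN1 x : ba_scal A (-1) x = ba_opp x.
Proof.
  apply (ba_addIr x); rewrite ba_addN.
  rewrite <- (ba_scal1 A x) at 1; rewrite <- ba_scalDl, Rplus_opp_r.
  apply ba_scal0.
Qed.

Lemma ba_oppD x y : ba_opp (ba_add x y) = ba_add (ba_opp x) (ba_opp y).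
Proof. rewrite <- !ba_scalN1; apply ba_scalDr. Qed.

Lemma ba_oppK x : ba_opp (ba_opp x) = x.
Proof.
  rewrite <- !ba_scalN1, ba_scalA.
  replace (-1 * -1) with 1 by ring; apply ba_scal1.
Qed.

Lemma ba_subr0 x : ba_add x (ba_opp ba_zero) = x.
Proof.
  rewrite <- (ba_add0 A (ba_opp ba_zero)), ba_addN; apply ba_addr0.
Qed.

Lemma ba_mulBl x y z : ba_mul (ba_add x (ba_opp y)) z = ba_add (ba_mul x z) (ba_opp (ba_mul y z)).
Proof. rewrite ba_mulDl, <- !ba_scalN1, ba_scal_mull; reflexivity. Qed.

Lemma ba_mulBr x y z : ba_mul z (ba_add x (ba_opp y)) = ba_add (ba_mul z x) (ba_opp (ba_mul z y)).
Proof. rewrite ba_mulDr, <- !ba_scalN1, ba_scal_mulr; reflexivity. Qed.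

Lemma ba_normN x : ba_norm (ba_opp x) = ba_norm x.
Proof. rewrite <- ba_scalN1, ba_normZ, Rabs_left by lra; ring. Qed.

Lemma ba_norm_ge0 x : 0 <= ba_norm x.
Proof.
  assert (Hnorm0 : ba_norm (@ba_zero A) = 0)
    by (rewrite <- (ba_scal0 ba_zero), ba_normZ, Rabs_R0; ring).
  pose proof (ba_normD A x (ba_opp x)) as H.
  rewrite ba_addN, Hnorm0, ba_normN in H; lra.
Qed.

Lemma ba_dist_eq0 x y : ba_dist x y = 0 -> x = y.
Proof.
  intro H; apply ba_norm_eq0 in H.
  rewrite <- (ba_addr0 x), <- (ba_addNl y), ba_addA, H, ba_add0; reflexivity.
Qed.

Lemma ba_distC x y : ba_dist x y = ba_dist y x.
Proof. rewrite <- ba_normN, ba_oppD, ba_oppK, ba_addC; reflexivity. Qed.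

Lemma ba_dist_triangle x y z : ba_dist x z <= ba_dist x y + ba_dist y z.
Proof.
  replace (ba_add x (ba_opp z)) with (ba_add (ba_add x (ba_opp y)) (ba_add y (ba_opp z))).
  - apply ba_normD.
  - rewrite <- ba_addA, (ba_addA A (ba_opp y)), ba_addNl, ba_add0; reflexivity.
Qed.

End VectorAlgebra.

Definition directed_prod (D1 D2 : DirectedSet) : DirectedSet.
Proof.
  refine (mkDirected (D1 * D2)
    (fun p q => ds_le D1 (fst p) (fst q) /\ ds_le D2 (snd p) (snd q)) _ _ _ _).
  - destruct (ds_inhabited D1) as [i], (ds_inhabited D2) as [j].
    exact (inhabits (i, j)).
  - intros [i j]; split; apply ds_refl.
  - intros [i1 j1] [i2 j2] [i3 j3] [H1 H2] [H3 H4]; split; eapply ds_trans; eauto.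
  - intros [i1 j1] [i2 j2].
    destruct (ds_directed D1 i1 i2) as [k [? ?]], (ds_directed D2 j1 j2) as [l [? ?]].
    exists (k, l); split; split; assumption.
Defined.

Lemma lt_div_succ_mult a b eps : 0 <= a -> 0 <= b -> a < eps / (b + 1) -> a * b < eps.
Proof.
  intros Ha Hb H; set (q := eps / (b + 1)) in *.
  assert (eps = q * (b + 1)) by (unfold q; field; lra); nra.
Qed.

Lemma small_inv_succ eps : 0 < eps -> exists N : nat, / INR (S N) < eps.
Proof.
  intro H; destruct (archimed_cor1 eps H) as [[|k] [Hk Hk']]; [lia|].
  exists k; assumption.
Qed.

Section Nets.

Variables (A : BanachAlgebra) (D : DirectedSet).
Implicit Types (e f : D -> A) (x l : A).

Definition net_cauchy f : Prop :=
  forall eps, 0 < eps -> exists i0 : D, forall i j : D,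
    ds_le D i0 i -> ds_le D i0 j -> ba_dist (f i) (f j) < eps.

Definition diff_net f (p : directed_prod D D) : A :=
  ba_add (f (fst p)) (ba_opp (f (snd p))).

Lemma net_converges_ext (L : DirectedSet) (f g : L -> A) l :
  (forall i, f i = g i) -> net_converges A L f l -> net_converges A L g l.
Proof.
  intros Hfg H eps Heps; destruct (H eps Heps) as [i0 Hi0].
  exists i0; intros i Hi; rewrite <- Hfg; auto.
Qed.

Lemma net_converges_unique f l l' :
  net_converges A D f l -> net_converges A D f l' -> l' = l.
Proof.
  intros H H'; apply ba_dist_eq0, Rle_antisym; [|apply ba_norm_ge0].
  apply Rnot_lt_le; intro Hpos.
  set (eps := ba_dist l' l / 2).
  destruct (H eps) as [i1 Hi1]; [unfold eps; lra|].
  destruct (H' eps) as [i2 Hi2]; [unfold eps; lra|].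
  destruct (ds_directed D i1 i2) as [k [Hk1 Hk2]].
  specialize (Hi1 k Hk1); specialize (Hi2 k Hk2).
  pose proof (ba_dist_triangle A l' (f k) l) as Htri.
  rewrite (ba_distC A l' (f k)) in Htri; unfold eps in *; lra.
Qed.

Lemma net_converges_mulr f l x :
  net_converges A D f l -> net_converges A D (fun i => ba_mul (f i) x) (ba_mul l x).
Proof.
  intros H eps Heps; pose proof (ba_norm_ge0 A x).
  destruct (H (eps / (ba_norm x + 1))) as [i0 Hi0]; [apply Rdiv_lt_0_compat; lra|].
  exists i0; intros i Hi; rewrite <- ba_mulBl.
  eapply Rle_lt_trans; [apply ba_normM|].
  apply lt_div_succ_mult; auto using ba_norm_ge0.
Qed.

Lemma net_converges_mull f l x :
  net_converges A D f l -> net_converges A D (fun i => ba_mul x (f i)) (ba_mul x l).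
Proof.
  intros H eps Heps; pose proof (ba_norm_ge0 A x).
  destruct (H (eps / (ba_norm x + 1))) as [i0 Hi0]; [apply Rdiv_lt_0_compat; lra|].
  exists i0; intros i Hi; rewrite <- ba_mulBr.
  eapply Rle_lt_trans; [apply ba_normM|]; rewrite Rmult_comm.
  apply lt_div_succ_mult; auto using ba_norm_ge0.
Qed.

Lemma net_converges_cauchy f l : net_converges A D f l -> net_cauchy f.
Proof.
  intros H eps Heps; destruct (H (eps / 2)) as [i0 Hi0]; [lra|].
  exists i0; intros i j Hi Hj.
  pose proof (ba_dist_triangle A (f i) l (f j)) as Htri.
  rewrite (ba_distC A l (f j)) in Htri.
  pose proof (Hi0 i Hi); pose proof (Hi0 j Hj); lra.
Qed.

Lemma diff_net_cvg0P f : net_converges A (directed_prod D D) (diff_net f) ba_zero <-> net_cauchy f.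
Proof.
  split.
  - intros H eps Heps; destruct (H eps Heps) as [[i1 i2] Hi].
    destruct (ds_directed D i1 i2) as [k [Hk1 Hk2]].
    exists k; intros i j Hi' Hj'.
    specialize (Hi (i, j)); unfold diff_net in Hi; simpl in Hi; rewrite ba_subr0 in Hi.
    apply Hi; split; eapply ds_trans; eauto.
  - intros H eps Heps; destruct (H eps Heps) as [i0 Hi0].
    exists (i0, i0); intros [i j] [Hi Hj]; unfold diff_net; simpl in *.
    rewrite ba_subr0; auto.
Qed.

(* A Cauchy net has a monotone sequence of indices beyond which it oscillates
   by less than 1/(n+1); this reduces completeness for nets to that for sequences. *)
Lemma net_cauchy_seq_indices f :
  net_cauchy f -> exists d : nat -> D,
    (forall n, ds_le D (d n) (d (S n))) /\
    (forall n i j, ds_le D (d n) i -> ds_le D (d n) j -> ba_dist (f i) (f j) < / INR (S n)).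
Proof.
  intro Hf.
  assert (Hstep : forall p : nat * D, exists k, ds_le D (snd p) k /\
            forall i j, ds_le D k i -> ds_le D k j -> ba_dist (f i) (f j) < / INR (S (fst p))).
  { intros [n a]; simpl.
    destruct (Hf (/ INR (S n))) as [k0 Hk0]; [apply Rinv_0_lt_compat, lt_0_INR; lia|].
    destruct (ds_directed D a k0) as [k [Hak Hk0k]].
    exists k; split; [assumption|].
    intros i j Hi Hj; apply Hk0; eapply ds_trans; eauto. }
  destruct (functional_choice _ Hstep) as [step Hstepv].
  destruct (ds_inhabited D) as [a0].
  exists (fix d n := match n with O => step (O, a0) | S m => step (S m, d m) end).
  split.
  - intro n; exact (proj1 (Hstepv (S n, _))).
  - intros [|n]; [exact (proj2 (Hstepv (O, a0))) | exact (proj2 (Hstepv (S n, _)))].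
Qed.

Lemma net_cauchy_converges f : net_cauchy f -> exists l, net_converges A D f l.
Proof.
  intro Hf; destruct (net_cauchy_seq_indices f Hf) as [d [Hd_step Hd_osc]].
  assert (Hd_mono : forall m n, (m <= n)%nat -> ds_le D (d m) (d n)).
  { intros m n Hmn; induction Hmn; [apply ds_refl | eapply ds_trans; eauto]. }
  destruct (ba_complete A (fun n => f (d n))) as [l Hl].
  { intros eps Heps; destruct (small_inv_succ eps Heps) as [N HN].
    exists N; intros m n Hm Hn.
    eapply Rlt_trans; [|exact HN]; apply Hd_osc; apply Hd_mono; assumption. }
  exists l; intros eps Heps.
  destruct (small_inv_succ (eps / 2)) as [N HN]; [lra|].
  destruct (Hl (eps / 2)) as [N' HN']; [lra|].
  set (M := Nat.max N N').
  exists (d M); intros i Hi.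
  pose proof (ba_dist_triangle A (f i) (f (d M)) l).
  assert (ba_dist (f i) (f (d M)) < / INR (S N)).
  { apply Hd_osc; [eapply ds_trans; [|exact Hi] | ]; apply Hd_mono; unfold M; lia. }
  assert (ba_dist (f (d M)) l < eps / 2) by (apply HN'; unfold M; lia).
  lra.
Qed.

Lemma diff_net_cvg0_converges e :
  net_converges A (directed_prod D D) (diff_net e) ba_zero -> exists l, net_converges A D e l.
Proof. intro H; apply net_cauchy_converges, diff_net_cvg0P, H. Qed.

Lemma left_approx_identity_mulr_diff_net e x :
  is_left_approx_identity A D e ->
  net_converges A (directed_prod D D) (fun p => ba_mul (diff_net e p) x) ba_zero.
Proof.
  intro He.
  apply (net_converges_ext _ (diff_net (fun i => ba_mul (e i) x))).
  - intro p; symmetry; apply ba_mulBl.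
  - apply diff_net_cvg0P; exact (net_converges_cauchy _ _ (He x)).
Qed.

Lemma right_approx_identity_mull_diff_net e x :
  is_right_approx_identity A D e ->
  net_converges A (directed_prod D D) (fun p => ba_mul x (diff_net e p)) ba_zero.
Proof.
  intro He.
  apply (net_converges_ext _ (diff_net (fun i => ba_mul x (e i)))).
  - intro p; symmetry; apply ba_mulBr.
  - apply diff_net_cvg0P; exact (net_converges_cauchy _ _ (He x)).
Qed.

Lemma left_approx_identity_limit_left_unit e l :
  is_left_approx_identity A D e -> net_converges A D e l -> is_left_unit A l.
Proof.
  intros He Hl x; exact (net_converges_unique _ _ _ (He x) (net_converges_mulr _ _ x Hl)).
Qed.

Lemma right_approx_identity_limit_right_unit e l :
  is_right_approx_identity A D e -> net_converges A D e l -> is_right_unit A l.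
Proof.
  intros He Hl x; exact (net_converges_unique _ _ _ (He x) (net_converges_mull _ _ x Hl)).
Qed.

End Nets.

Theorem corollary1p3 (A : BanachAlgebra) :
  ( (~ exists e : A, is_unit A e) ->
    (exists (D : DirectedSet) (e : D -> A), is_approx_identity A D e) ->
    exists (L : DirectedSet) (y : L -> A),
      (forall x : A, net_converges A L (fun m => ba_mul (y m) x) ba_zero /\
                     net_converges A L (fun m => ba_mul x (y m)) ba_zero) /\
      ~ net_converges A L y ba_zero )
  /\
  ( (~ exists e : A, is_left_unit A e) ->
    (exists (D : DirectedSet) (e : D -> A), is_left_approx_identity A D e) ->
    exists (L : DirectedSet) (y : L -> A),
      (forall x : A, net_converges A L (fun m => ba_mul (y m) x) ba_zero) /\
      ~ net_converges A L y ba_zero )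
  /\
  ( (~ exists e : A, is_right_unit A e) ->
    (exists (D : DirectedSet) (e : D -> A), is_right_approx_identity A D e) ->
    exists (L : DirectedSet) (y : L -> A),
      (forall x : A, net_converges A L (fun m => ba_mul x (y m)) ba_zero) /\
      ~ net_converges A L y ba_zero ).
Proof.
  split; [|split].
  - intros Hno_unit [D [e [He_l He_r]]].
    exists (directed_prod D D), (diff_net A D e); split.
    + split; [apply left_approx_identity_mulr_diff_net | apply right_approx_identity_mull_diff_net];
        assumption.
    + intro Hy; destruct (diff_net_cvg0_converges _ _ _ Hy) as [l Hl].
      apply Hno_unit; exists l; intro x; split.
      * exact (left_approx_identity_limit_left_unit _ _ _ _ He_l Hl x).
      * exact (right_approx_identity_limit_right_unit _ _ _ _ He_r Hl x).
  - intros Hno_unit [D [e He]].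
    exists (directed_prod D D), (diff_net A D e); split.
    + intro x; apply left_approx_identity_mulr_diff_net, He.
    + intro Hy; destruct (diff_net_cvg0_converges _ _ _ Hy) as [l Hl].
      apply Hno_unit; exists l; exact (left_approx_identity_limit_left_unit _ _ _ _ He Hl).
  - intros Hno_unit [D [e He]].
    exists (directed_prod D D), (diff_net A D e); split.
    + intro x; apply right_approx_identity_mull_diff_net, He.
    + intro Hy; destruct (diff_net_cvg0_converges _ _ _ Hy) as [l Hl].
      apply Hno_unit; exists l; exact (right_approx_identity_limit_right_unit _ _ _ _ He Hl).
Qed.
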